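(* Let $M=(E,\mathcal{I})$ be a matroid with rank function $r$ and let $L\in\mathbb{R}^{E\times E}$ be a symmetric positive-definite loss matrix for the row player (i.e. $L^T=L$ and $x^TLx>0$ for all $x\ne0$). If the matroid game with loss matrix $L$ has a symmetric Nash equilibrium, then it is unique.
   Context: $B(M)=\{x\ge0: x(S)\le r(S)\ \forall S\subseteq E,\ x(E)=r(E)\}$. In the matroid game, the row player chooses $x\in B(M)$ minimizing $x^TLy$ and the column player chooses $y\in B(M)$ maximizing it; $(x,x)$ with $x\in B(M)$ is a symmetric Nash equilibrium if $x^TLz\le x^TLx\le z^TLx$ for all $z\in B(M)$. *)

From mathcomp Require Import all_boot all_order all_algebra.
Set Implicit Arguments. Unset Strict Implicit. Unset Printing Implicit Defensive.
Import Order.TTheory GRing.Theory Num.Theory.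
Local Open Scope ring_scope.

Record matroid (E : finType) := Matroid {
  indep : {set E} -> bool;
  indep0 : indep set0;
  indep_sub : forall A B : {set E}, A \subset B -> indep B -> indep A;
  indep_exchange : forall A B : {set E}, indep A -> indep B -> (#|A| < #|B|)%N ->
    exists2 e, e \in B :\: A & indep (e |: A)
}.

Definition mrank (E : finType) (M : matroid E) (S : {set E}) : nat :=
  \max_(A : {set E} | indep M A && (A \subset S)) #|A|.

Definition base_polytope (R : realFieldType) (E : finType) (M : matroid E)
  : pred {ffun E -> R} :=
  fun x => [&& [forall e, 0 <= x e],
              [forall S : {set E}, \sum_(e in S) x e <= (mrank M S)%:R] &
              \sum_(e in [set: E]) x e == (mrank M [set: E])%:R].

Definition bform (R : realFieldType) (E : finType) (x : {ffun E -> R})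
  (L : E -> E -> R) (y : {ffun E -> R}) : R :=
  \sum_(i : E) \sum_(j : E) x i * L i j * y j.

Definition sym_nash (R : realFieldType) (E : finType) (M : matroid E)
  (L : E -> E -> R) (x : {ffun E -> R}) : Prop :=
  base_polytope M x /\
  forall z, base_polytope M z ->
    bform x L z <= bform x L x /\ bform x L x <= bform z L x.

From mathcomp Require Import all_boot all_order all_algebra.
From mathcomp Require Import lra.
Import Order.TTheory GRing.Theory Num.Theory.
Local Open Scope ring_scope.

(* Adding the two equilibrium inequalities [x'Lx <= y'Lx] and [y'Ly <= x'Ly]
   gives [(x - y)'L(x - y) <= 0], so [x = y] by positive definiteness. *)

Section BilinearForm.

Variables (R : realFieldType) (E : finType) (L : E -> E -> R).

Lemma bformBl (x y z : {ffun E -> R}) :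
  bform (x - y) L z = bform x L z - bform y L z.
Proof.
rewrite /bform -sumrB; apply: eq_bigr => i _; rewrite -sumrB.
by apply: eq_bigr => j _; rewrite !ffunE !mulrBl.
Qed.

Lemma bformBr (x y z : {ffun E -> R}) :
  bform z L (x - y) = bform z L x - bform z L y.
Proof.
rewrite /bform -sumrB; apply: eq_bigr => i _; rewrite -sumrB.
by apply: eq_bigr => j _; rewrite !ffunE mulrBr.
Qed.

Lemma bform_subsq (x y : {ffun E -> R}) :
  bform (x - y) L (x - y) =
  bform x L x + bform y L y - bform y L x - bform x L y.
Proof. rewrite bformBl !bformBr; lra. Qed.

Lemma bform_pd_eq (x y : {ffun E -> R}) :
  (forall z : {ffun E -> R}, z != 0 -> 0 < bform z L z) ->
  bform (x - y) L (x - y) <= 0 -> x = y.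
Proof.
move=> Lpd le0; apply/eqP; rewrite -subr_eq0.
by apply: contraTT le0 => /Lpd; rewrite -ltNge.
Qed.

End BilinearForm.

Theorem theorem12 (R : realFieldType) (E : finType) (M : matroid E)
  (L : E -> E -> R)
  (Lsym : forall i j, L i j = L j i)
  (Lpd : forall x : {ffun E -> R}, x != 0 -> 0 < bform x L x) :
  forall x y : {ffun E -> R}, sym_nash M L x -> sym_nash M L y -> x = y.
Proof.
move=> x y [Bx Nx] [By Ny].
have [_ x_best] := Nx y By.
have [_ y_best] := Ny x Bx.
apply: bform_pd_eq Lpd _.
rewrite bform_subsq; lra.
Qed.
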